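(* Let $(\mathcal C,\mathbb E,\mathfrak s)$ be an $n$-exangulated category and let $\varphi^\bullet=(\varphi_0,\dots,\varphi_{n+1})$ be a morphism in $S(\mathcal C)$ from $A^\bullet=(A_0\xrightarrow{\alpha_0}A_1\to\cdots\xrightarrow{\alpha_n}A_{n+1}\overset{\delta}{\dashrightarrow})$ to $B^\bullet=(B_0\xrightarrow{\beta_0}B_1\to\cdots\xrightarrow{\beta_n}B_{n+1}\overset{\delta'}{\dashrightarrow})$. Then there exist a distinguished $n$-exangle $I(\varphi^\bullet)=(B_0\xrightarrow{e_0}E_1\xrightarrow{e_1}\cdots\xrightarrow{e_{n-1}}E_n\xrightarrow{e_n}A_{n+1}\overset{(\varphi_0)_*\delta}{\dashrightarrow})$ and morphisms of distinguished $n$-exangles $\pi^\bullet=(\varphi_0,g_1,\dots,g_n,1_{A_{n+1}}):A^\bullet\to I(\varphi^\bullet)$ and $i^\bullet=(1_{B_0},h_1,\dots,h_n,\varphi_{n+1}):I(\varphi^\bullet)\to B^\bullet$ such that $$E_1\xrightarrow{\left[\begin{smallmatrix}-e_1\\ h_1\end{smallmatrix}\right]}E_2\oplus B_1\xrightarrow{\left[\begin{smallmatrix}-e_2&0\\ h_2&\beta_1\end{smallmatrix}\right]}\cdots\xrightarrow{\left[\begin{smallmatrix}-e_n&0\\ h_n&\beta_{n-1}\end{smallmatrix}\right]}A_{n+1}\oplus B_n\xrightarrow{[\varphi_{n+1}\ \beta_n]}B_{n+1}\overset{(e_0)_*\delta'}{\dashrightarrow}$$ is a distinguished $n$-exangle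 $C(\varphi^\bullet)$ and $(e_0,\left[\begin{smallmatrix}0\\1\end{smallmatrix}\right],\dots,\left[\begin{smallmatrix}0\\1\end{smallmatrix}\right],1_{B_{n+1}}):B^\bullet\to C(\varphi^\bullet)$ is a morphism of distinguished $n$-exangles. Moreover $\underline{\varphi^\bullet}=\underline{i^\bullet\pi^\bullet}$ in $S(\mathcal C)/\mathcal R_2$.
   Context: $(\mathcal C,\mathbb E,\mathfrak s)$ is an $n$-exangulated category in the sense of Herschend–Liu–Nakaoka ($\mathcal C$ additive, $\mathbb E:\mathcal C^{op}\times\mathcal C\to\mathrm{Ab}$ an additive bifunctor, $\mathfrak s$ an exact realization of $\mathbb E$ satisfying (EA1), (EA2), (EA2)$^{op}$). For $\delta\in\mathbb E(C,A)$, $a:A\to A'$, $c:C'\to C$, write $a_*\delta=\mathbb E(C,a)(\delta)$ and $c^*\delta=\mathbb E(c,A)(\delta)$. A distinguished $n$-exangle $A_0\xrightarrow{\alpha_0}A_1\to\cdots\to A_n\xrightarrow{\alpha_n}A_{n+1}\overset{\delta}{\dashrightarrow}$ is a complex together with $\delta\in\mathbb E(A_{n+1},A_0)$ such that $\mathfrak s(\delta)$ is the homotopy class of that complex. $S(\mathcal C)$ denotes the category whose objects are distinguished $n$-exangles and whose morphisms $A^\bullet\to B^\bullet$ are tuples $\varphi^\bullet=(\varphi_0,\dots,\varphi_{n+1})$, $\varphi_i:A_i\to B_i$, making all squares commute and satisfying $(\varphi_0)_*\delta=(\varphi_{n+1})^*\delta'$. $\mathcal R_2(A^\bullet,B^\bullet)$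 is the set of morphisms $\varphi^\bullet$ such that $\varphi_{n+1}$ factors through $\beta_n$; it is an ideal of $S(\mathcal C)$, and $\underline{\varphi^\bullet}$ denotes the image of $\varphi^\bullet$ in the quotient category $S(\mathcal C)/\mathcal R_2$. *)

From HB Require Import structures.
From mathcomp Require Import all_boot all_algebra.
Set Implicit Arguments. Unset Strict Implicit. Unset Printing Implicit Defensive.
Import GRing.Theory.
Local Open Scope ring_scope.

Record AddCat := {
  Obj :> Type;
  Mor : Obj -> Obj -> zmodType;
  cmp : forall A B C : Obj, Mor B C -> Mor A B -> Mor A C;
  idm : forall A : Obj, Mor A A;
  cmpA : forall A B C D (h : Mor C D) (g : Mor B C) (f : Mor A B),
      cmp h (cmp g f) = cmp (cmp h g) f;
  cmp1f : forall A B (f : Mor A B), cmp (idm B) f = f;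
  cmpf1 : forall A B (f : Mor A B), cmp f (idm A) = f;
  cmpDl : forall A B C (g g' : Mor B C) (f : Mor A B),
      cmp (g + g') f = cmp g f + cmp g' f;
  cmpDr : forall A B C (g : Mor B C) (f f' : Mor A B),
      cmp g (f + f') = cmp g f + cmp g f';
  zobj : Obj;
  zobj_init : forall A (f : Mor zobj A), f = 0;
  zobj_term : forall A (f : Mor A zobj), f = 0;
  bp : Obj -> Obj -> Obj;
  bi1 : forall A B, Mor A (bp A B);
  bi2 : forall A B, Mor B (bp A B);
  bq1 : forall A B, Mor (bp A B) A;
  bq2 : forall A B, Mor (bp A B) B;
  bq1i1 : forall A B, cmp (bq1 A B) (bi1 A B) = idm A;
  bq2i2 : forall A B, cmp (bq2 A B) (bi2 A B) = idm B;
  bq1i2 : forall A B, cmp (bq1 A B) (bi2 A B) = 0;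
  bq2i1 : forall A B, cmp (bq2 A B) (bi1 A B) = 0;
  bsum : forall A B, cmp (bi1 A B) (bq1 A B) + cmp (bi2 A B) (bq2 A B) = idm (bp A B)
}.
Arguments Mor {a}.
Arguments cmp {a A B C}.
Arguments idm {a}.
Arguments zobj {a}.
Arguments bp {a}.
Arguments bi1 {a A B}. Arguments bi2 {a A B}.
Arguments bq1 {a A B}. Arguments bq2 {a A B}.

(* A biadditive functor E : C^op x C -> Ab.  [Ext E Z X] is E(Z, X);         *)
Record ExtFun (C : AddCat) := {
  Ext : C -> C -> zmodType;
  push : forall (X X' Z : C), Mor X X' -> Ext Z X -> Ext Z X';
  pull : forall (Z Z' X : C), Mor Z' Z -> Ext Z X -> Ext Z' X;
  pushD : forall X X' Z (a : Mor X X') (d d' : Ext Z X), push a (d + d') = push a d + push a d';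
  pullD : forall Z Z' X (c : Mor Z' Z) (d d' : Ext Z X), pull c (d + d') = pull c d + pull c d';
  pushDm : forall X X' Z (a a' : Mor X X') (d : Ext Z X), push (a + a') d = push a d + push a' d;
  pullDm : forall Z Z' X (c c' : Mor Z' Z) (d : Ext Z X), pull (c + c') d = pull c d + pull c' d;
  push1 : forall X Z (d : Ext Z X), push (idm X) d = d;
  pull1 : forall Z X (d : Ext Z X), pull (idm Z) d = d;
  pushM : forall X X' X'' Z (a : Mor X X') (b : Mor X' X'') (d : Ext Z X),
      push (cmp b a) d = push b (push a d);
  pullM : forall Z Z' Z'' X (c : Mor Z' Z) (c' : Mor Z'' Z') (d : Ext Z X),
      pull (cmp c c') d = pull c' (pull c d);
  push_pull : forall X X' Z Z' (a : Mor X X') (c : Mor Z' Z) (d : Ext Z X),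
      push a (pull c d) = pull c (push a d)
}.
Arguments Ext {C}.
Arguments push {C e X X' Z}.
Arguments pull {C e Z Z' X}.

(* Sequences  X_0 -> X_1 -> ... -> X_{n+1}  (indices > n+1 are irrelevant). *)
Record seqC (C : AddCat) := {
  ob : nat -> C;
  dd : forall i, Mor (ob i) (ob i.+1)
}.
Arguments ob {C}.
Arguments dd {C}.

Definition eqH (C : AddCat) (A B : C) (p : A = B) : Mor A B :=
  match p in _ = B' return Mor A B' with erefl => idm A end.

Definition mcol (C : AddCat) (T P Q : C) (a : Mor T P) (b : Mor T Q) : Mor T (bp P Q) :=
  cmp bi1 a + cmp bi2 b.
Definition mrow (C : AddCat) (T P Q : C) (a : Mor P T) (b : Mor Q T) : Mor (bp P Q) T :=
  cmp a bq1 + cmp b bq2.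
(* [[a, b], [c, d]] : P (+) Q -> P' (+) Q' *)
Definition mmat (C : AddCat) (P Q P' Q' : C) (a : Mor P P') (b : Mor Q P')
    (c : Mor P Q') (d : Mor Q Q') : Mor (bp P Q) (bp P' Q') :=
  mcol (mrow a b) (mrow c d).

Section NDefs.
Unset Implicit Arguments.
Variables (C : AddCat) (E : ExtFun C) (n : nat).

Definition is_cpx (X : seqC C) : Prop :=
  forall i, (i < n)%N -> cmp (dd X i.+1) (dd X i) = 0.

Definition cmap (X Y : seqC C) (f : forall i, Mor (ob X i) (ob Y i)) : Prop :=
  forall i, (i <= n)%N -> cmp (f i.+1) (dd X i) = cmp (dd Y i) (f i).

Definition homotopic (X Y : seqC C) (f g : forall i, Mor (ob X i) (ob Y i)) : Prop :=
  exists phi : forall i, Mor (ob X i.+1) (ob Y i),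
    cmp (phi 0%N) (dd X 0%N) = 0 /\ cmp (dd Y n) (phi n) = 0 /\
    forall j, (j < n)%N ->
      f j.+1 - g j.+1 = cmp (dd Y j) (phi j) + cmp (phi j.+1) (dd X j.+1).

(* homotopy equivalence in C^{n+2}_{(A,C)}, where the ends of X and Y are
   identified by p0 and p1 *)
Definition hequiv (X Y : seqC C) (p0 : ob X 0%N = ob Y 0%N) (p1 : ob X n.+1 = ob Y n.+1) : Prop :=
  exists (f : forall i, Mor (ob X i) (ob Y i)) (g : forall i, Mor (ob Y i) (ob X i)),
    [/\ cmap X Y f, cmap Y X g,
        f 0%N = eqH p0 /\ f n.+1 = eqH p1,
        g 0%N = eqH (esym p0) /\ g n.+1 = eqH (esym p1) &
        homotopic X X (fun i => cmp (g i) (f i)) (fun i => idm (ob X i)) /\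
        homotopic Y Y (fun i => cmp (f i) (g i)) (fun i => idm (ob Y i))].

(* n-exangle <X, d> (HLN Def. 2.4): exactness of
   C(-,X_0) -> ... -> C(-,X_{n+1}) -> E(-,X_0)   and
   C(X_{n+1},-) -> ... -> C(X_0,-) -> E(X_{n+1},-) *)
Definition exangle (X : seqC C) (d : Ext E (ob X n.+1) (ob X 0%N)) : Prop :=
  is_cpx X /\
  (forall T : C,
     (forall j, (j < n)%N -> forall f : Mor T (ob X j.+1),
        cmp (dd X j.+1) f = 0 <-> exists g : Mor T (ob X j), f = cmp (dd X j) g) /\
     (forall f : Mor T (ob X n.+1),
        pull f d = 0 <-> exists g : Mor T (ob X n), f = cmp (dd X n) g)) /\
  (forall T : C,
     (forall j, (j < n)%N -> forall f : Mor (ob X j.+1) T,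
        cmp f (dd X j) = 0 <-> exists g : Mor (ob X j.+2) T, f = cmp g (dd X j.+1)) /\
     (forall f : Mor (ob X 0%N) T,
        push f d = 0 <-> exists g : Mor (ob X 1%N) T, f = cmp g (dd X 0%N))).

Definition smor (X : seqC C) (dX : Ext E (ob X n.+1) (ob X 0%N))
    (Y : seqC C) (dY : Ext E (ob Y n.+1) (ob Y 0%N))
    (f : forall i, Mor (ob X i) (ob Y i)) : Prop :=
  cmap X Y f /\ push (f 0%N) dX = pull (f n.+1) dY.

Definition inR2 (X : seqC C) (dX : Ext E (ob X n.+1) (ob X 0%N))
    (Y : seqC C) (dY : Ext E (ob Y n.+1) (ob Y 0%N))
    (f : forall i, Mor (ob X i) (ob Y i)) : Prop :=
  smor X dX Y dY f /\ exists k : Mor (ob X n.+1) (ob Y n), f n.+1 = cmp (dd Y n) k.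

(* equality of images in S(C)/R_2 *)
Definition qeq (X : seqC C) (dX : Ext E (ob X n.+1) (ob X 0%N))
    (Y : seqC C) (dY : Ext E (ob Y n.+1) (ob Y 0%N))
    (f g : forall i, Mor (ob X i) (ob Y i)) : Prop :=
  inR2 X dX Y dY (fun i => f i - g i).

(* mapping cone of f : X -> Y with f_0 = 1 (used in (EA2)):
   X_1 -> X_2 (+) Y_1 -> ... -> X_{n+1} (+) Y_n -> Y_{n+1} *)
Definition cone_ob (X Y : seqC C) (i : nat) : C :=
  match i with
  | 0 => ob X 1%N
  | j.+1 => if (j < n)%N then bp (ob X j.+2) (ob Y j.+1) else ob Y j.+1
  end.

Definition cone_dd (X Y : seqC C) (f : forall i, Mor (ob X i) (ob Y i)) (i : nat) :
    Mor (cone_ob X Y i) (cone_ob X Y i.+1) :=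
  match i as i0 return Mor (cone_ob X Y i0) (cone_ob X Y i0.+1) with
  | 0 => match (0 < n)%N as b
           return Mor (ob X 1%N) (if b then bp (ob X 2%N) (ob Y 1%N) else ob Y 1%N) with
         | true => mcol (- dd X 1%N) (f 1%N)
         | false => 0
         end
  | j.+1 => match (j < n)%N as b1, (j.+1 < n)%N as b2
             return Mor (if b1 then bp (ob X j.+2) (ob Y j.+1) else ob Y j.+1)
                        (if b2 then bp (ob X j.+3) (ob Y j.+2) else ob Y j.+2) with
           | true, true => mmat (- dd X j.+2) 0 (f j.+2) (dd Y j.+1)
           | true, false => mrow (f j.+2) (dd Y j.+1)
           | false, _ => 0
           end
  end.

Definition cone (X Y : seqC C) (f : forall i, Mor (ob X i) (ob Y i)) : seqC C :=
  {| ob := cone_ob X Y; dd := cone_dd X Y f |}.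

Lemma coneT (X Y : seqC C) (f : forall i, Mor (ob X i) (ob Y i)) :
  ob (cone X Y f) n.+1 = ob Y n.+1.
Proof. by rewrite /= ltnn. Qed.

(* the canonical morphism Y -> cone f :  (d^0_X, [0;1], ..., [0;1], 1) *)
Definition cone_in (X Y : seqC C) (p : ob X 0%N = ob Y 0%N)
    (f : forall i, Mor (ob X i) (ob Y i)) (i : nat) : Mor (ob Y i) (ob (cone X Y f) i) :=
  match i as i0 return Mor (ob Y i0) (cone_ob X Y i0) with
  | 0 => cmp (dd X 0%N) (eqH (esym p))
  | j.+1 => match (j < n)%N as b
             return Mor (ob Y j.+1) (if b then bp (ob X j.+2) (ob Y j.+1) else ob Y j.+1) with
           | true => bi2
           | false => idm _
           end
  end.

(* dual mapping cone of f : X -> Y with f_{n+1} = 1 (used in (EA2^op)):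
   X_0 -> X_1 (+) Y_0 -> ... -> X_n (+) Y_{n-1} -> Y_n
   (the literal dual, in C^op, of the mapping cone above) *)
Definition cocone_ob (X Y : seqC C) (i : nat) : C :=
  match i with
  | 0 => ob X 0%N
  | j.+1 => if (j < n)%N then bp (ob X j.+1) (ob Y j) else ob Y j
  end.

Definition cocone_dd (X Y : seqC C) (f : forall i, Mor (ob X i) (ob Y i)) (i : nat) :
    Mor (cocone_ob X Y i) (cocone_ob X Y i.+1) :=
  match i as i0 return Mor (cocone_ob X Y i0) (cocone_ob X Y i0.+1) with
  | 0 => match (0 < n)%N as b
           return Mor (ob X 0%N) (if b then bp (ob X 1%N) (ob Y 0%N) else ob Y 0%N) with
         | true => mcol (dd X 0%N) (f 0%N)
         | false => 0
         end
  | j.+1 => match (j < n)%N as b1, (j.+1 < n)%N as b2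
             return Mor (if b1 then bp (ob X j.+1) (ob Y j) else ob Y j)
                        (if b2 then bp (ob X j.+2) (ob Y j.+1) else ob Y j.+1) with
           | true, true => mmat (dd X j.+1) 0 (f j.+1) (- dd Y j)
           | true, false => mrow (f j.+1) (- dd Y j)
           | false, _ => 0
           end
  end.

Definition cocone (X Y : seqC C) (f : forall i, Mor (ob X i) (ob Y i)) : seqC C :=
  {| ob := cocone_ob X Y; dd := cocone_dd X Y f |}.

Lemma coconeT (X Y : seqC C) (f : forall i, Mor (ob X i) (ob Y i)) :
  ob (cocone X Y f) n.+1 = ob Y n.
Proof. by rewrite /= ltnn. Qed.

(* [A = A -> 0 -> ... -> 0]  and  [0 -> ... -> 0 -> A = A] *)
Definition triv_l (A : C) : seqC C :=
  {| ob := fun i => match i with 0 | 1 => A | _ => zobj end;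
     dd := fun i => match i as i0 return
               Mor (match i0 with 0 | 1 => A | _ => zobj end)
                   (match i0.+1 with 0 | 1 => A | _ => zobj end) with
             | 0 => idm A
             | _ => 0
             end |}.

Definition triv_r (A : C) : seqC C :=
  {| ob := fun i => if (i < n)%N then zobj else A;
     dd := fun i => match (i < n)%N as b1, (i.+1 < n)%N as b2 return
               Mor (if b1 then zobj else A) (if b2 then zobj else A) with
             | false, false => idm A
             | _, _ => 0
             end |}.

Definition inflation (A B : C) (f : Mor A B)
    (real : forall X : seqC C, Ext E (ob X n.+1) (ob X 0%N) -> Prop) : Prop :=
  exists (X : seqC C) (d : Ext E (ob X n.+1) (ob X 0%N))
         (p0 : ob X 0%N = A) (p1 : ob X 1%N = B),
    real X d /\ cmp (eqH p1) (cmp (dd X 0%N) (eqH (esym p0))) = f.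

Definition deflation (A B : C) (f : Mor A B)
    (real : forall X : seqC C, Ext E (ob X n.+1) (ob X 0%N) -> Prop) : Prop :=
  exists (X : seqC C) (d : Ext E (ob X n.+1) (ob X 0%N))
         (p0 : ob X n = A) (p1 : ob X n.+1 = B),
    real X d /\ cmp (eqH p1) (cmp (dd X n) (eqH (esym p0))) = f.

End NDefs.
Arguments is_cpx {C} n X.
Arguments cmap {C} n X Y f.
Arguments homotopic {C} n X Y f g.
Arguments hequiv {C} n X Y p0 p1.
Arguments exangle {C} E n X d.
Arguments smor {C E} n X dX Y dY f.
Arguments inR2 {C E} n X dX Y dY f.
Arguments qeq {C E} n X dX Y dY f g.
Arguments cone_ob {C} n X Y i.
Arguments cone_dd {C} n X Y f i.
Arguments cone {C} n {X Y} f.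
Arguments coneT {C} n {X Y} f.
Arguments cone_in {C} n {X Y} p f i.
Arguments cocone_ob {C} n X Y i.
Arguments cocone_dd {C} n X Y f i.
Arguments cocone {C} n {X Y} f.
Arguments coconeT {C} n {X Y} f.
Arguments triv_l {C} A.
Arguments triv_r {C} n A.
Arguments inflation {C} E n {A B} f real.
Arguments deflation {C} E n {A B} f real.

(* [realizes X d] means  s(d) = [X]  (X a representative of the class s(d)). *)
Record nExang (n : nat) := {
  ncat :> AddCat;
  nE : ExtFun ncat;
  realizes : forall X : seqC ncat, Ext nE (ob X n.+1) (ob X 0%N) -> Prop;
  n_pos : (0 < n)%N;
  (* s(d) is a homotopy class of complexes in C^{n+2}_{(A,C)} *)
  real_ex : forall (A Z : ncat) (d : Ext nE Z A),
      exists (X : seqC ncat) (p0 : ob X 0%N = A) (p1 : ob X n.+1 = Z),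
        realizes X (pull (eqH p1) (push (eqH (esym p0)) d));
  real_cpx : forall X d, realizes X d -> is_cpx n X;
  real_class : forall (X Y : seqC ncat) (d : Ext nE (ob X n.+1) (ob X 0%N))
      (p0 : ob X 0%N = ob Y 0%N) (p1 : ob X n.+1 = ob Y n.+1),
      realizes X d -> is_cpx n Y ->
      (realizes Y (pull (eqH (esym p1)) (push (eqH p0) d)) <-> hequiv n X Y p0 p1);
  R0 : forall (X Y : seqC ncat) (dX : Ext nE (ob X n.+1) (ob X 0%N))
      (dY : Ext nE (ob Y n.+1) (ob Y 0%N))
      (a : Mor (ob X 0%N) (ob Y 0%N)) (c : Mor (ob X n.+1) (ob Y n.+1)),
      realizes X dX -> realizes Y dY -> push a dX = pull c dY ->
      exists f, cmap n X Y f /\ f 0%N = a /\ f n.+1 = c;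
  R1 : forall X d, realizes X d -> exangle nE n X d;
  R2l : forall A : ncat, realizes (triv_l A) 0;
  R2r : forall A : ncat, realizes (triv_r n A) 0;
  EA1i : forall (A B D : ncat) (f : Mor A B) (g : Mor B D),
      inflation nE n f realizes -> inflation nE n g realizes -> inflation nE n (cmp g f) realizes;
  EA1d : forall (A B D : ncat) (f : Mor A B) (g : Mor B D),
      deflation nE n f realizes -> deflation nE n g realizes -> deflation nE n (cmp g f) realizes;
  EA2 : forall (X Y : seqC ncat) (dY : Ext nE (ob Y n.+1) (ob Y 0%N))
      (p : ob X 0%N = ob Y 0%N) (c : Mor (ob X n.+1) (ob Y n.+1)),
      realizes X (push (eqH (esym p)) (pull c dY)) -> realizes Y dY ->
      exists f, [/\ cmap n X Y f, f 0%N = eqH p, f n.+1 = c &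
        realizes (cone n f) (pull (eqH (coneT n f)) (push (cmp (dd X 0%N) (eqH (esym p))) dY))];
  EA2op : forall (X Y : seqC ncat) (dX : Ext nE (ob X n.+1) (ob X 0%N))
      (a : Mor (ob X 0%N) (ob Y 0%N)) (p : ob X n.+1 = ob Y n.+1),
      realizes X dX -> realizes Y (pull (eqH (esym p)) (push a dX)) ->
      exists f, [/\ cmap n X Y f, f 0%N = a, f n.+1 = eqH p &
        realizes (cocone n f) (pull (eqH (coconeT n f)) (pull (cmp (eqH (esym p)) (dd Y n)) dX))]
}.
Arguments realizes {_ _} _ _.
Arguments nE {n} _ : rename.

From mathcomp Require Import all_boot all_algebra.
From Stdlib Require Import ProofIrrelevance.
Import GRing.Theory.
Local Open Scope ring_scope.

(* Realize (phi_0)_* delta by I; (R0) lifts (phi_0, 1) to pi : A -> I.  Since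
   (phi_0)_* delta = (phi_{n+1})^* delta', (EA2) lifts (1, phi_{n+1}) to
   i : I -> B with distinguished mapping cone.  Finally phi - i pi vanishes in
   degree n+1, so it lies in R_2 with the zero factorization. *)

Section AddCatTheory.
Variable C : AddCat.

Lemma cmp0l (A B D : C) (f : Mor A B) : cmp (0 : Mor B D) f = 0.
Proof. by apply: (addrI (cmp (0 : Mor B D) f)); rewrite -cmpDl !addr0. Qed.

Lemma cmp0r (A B D : C) (g : Mor B D) : cmp g (0 : Mor A B) = 0.
Proof. by apply: (addrI (cmp g (0 : Mor A B))); rewrite -cmpDr !addr0. Qed.

Lemma cmpNl (A B D : C) (g : Mor B D) (f : Mor A B) : cmp (- g) f = - cmp g f.
Proof. by apply/eqP; rewrite -subr_eq0 opprK -cmpDl addNr cmp0l. Qed.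

Lemma cmpNr (A B D : C) (g : Mor B D) (f : Mor A B) : cmp g (- f) = - cmp g f.
Proof. by apply/eqP; rewrite -subr_eq0 opprK -cmpDr addNr cmp0r. Qed.

Lemma cmpBl (A B D : C) (g g' : Mor B D) (f : Mor A B) :
  cmp (g - g') f = cmp g f - cmp g' f.
Proof. by rewrite cmpDl cmpNl. Qed.

Lemma cmpBr (A B D : C) (g : Mor B D) (f f' : Mor A B) :
  cmp g (f - f') = cmp g f - cmp g f'.
Proof. by rewrite cmpDr cmpNr. Qed.

Lemma eqHK (A B : C) (p : A = B) : cmp (eqH p) (eqH (esym p)) = idm B.
Proof. by case: _ / p; rewrite /= cmp1f. Qed.

Lemma eqH_refl (A : C) (p : A = A) : eqH p = idm A.
Proof. by rewrite (proof_irrelevance _ p erefl). Qed.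

End AddCatTheory.

Section ExtFunTheory.
Variables (C : AddCat) (E : ExtFun C).

Lemma pushNm (X X' Z : C) (a : Mor X X') (d : Ext E Z X) : push (- a) d = - push a d.
Proof.
apply/eqP; rewrite -subr_eq0 opprK -pushDm addNr.
by apply/eqP; apply: (addrI (push (0 : Mor X X') d)); rewrite -pushDm !addr0.
Qed.

Lemma pullNm (Z Z' X : C) (c : Mor Z' Z) (d : Ext E Z X) : pull (- c) d = - pull c d.
Proof.
apply/eqP; rewrite -subr_eq0 opprK -pullDm addNr.
by apply/eqP; apply: (addrI (pull (0 : Mor Z' Z) d)); rewrite -pullDm !addr0.
Qed.

Lemma pushBm (X X' Z : C) (a a' : Mor X X') (d : Ext E Z X) :
  push (a - a') d = push a d - push a' d.
Proof. by rewrite pushDm pushNm. Qed.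

Lemma pullBm (Z Z' X : C) (c c' : Mor Z' Z) (d : Ext E Z X) :
  pull (c - c') d = pull c d - pull c' d.
Proof. by rewrite pullDm pullNm. Qed.

End ExtFunTheory.

Section MorphismsOfExangles.
Variables (C : AddCat) (E : ExtFun C) (n : nat).
Variables (X Y Z : seqC C).
Variables (dX : Ext E (ob X n.+1) (ob X 0%N)) (dY : Ext E (ob Y n.+1) (ob Y 0%N))
          (dZ : Ext E (ob Z n.+1) (ob Z 0%N)).

Lemma smor_comp (f : forall i, Mor (ob X i) (ob Y i)) (g : forall i, Mor (ob Y i) (ob Z i)) :
  smor n X dX Y dY f -> smor n Y dY Z dZ g ->
  smor n X dX Z dZ (fun i => cmp (g i) (f i)).
Proof.
move=> [cf ef] [cg eg]; split=> [i le_in | /=].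
  by rewrite -cmpA cf // cmpA cg // -cmpA.
by rewrite pushM ef push_pull eg pullM.
Qed.

Lemma smorB (f g : forall i, Mor (ob X i) (ob Y i)) :
  smor n X dX Y dY f -> smor n X dX Y dY g ->
  smor n X dX Y dY (fun i => f i - g i).
Proof.
move=> [cf ef] [cg eg]; split=> [i le_in | /=].
  by rewrite cmpBl cmpBr cf // cg.
by rewrite pushBm pullBm ef eg.
Qed.

Lemma qeq_of_last_eq (f g : forall i, Mor (ob X i) (ob Y i)) :
  smor n X dX Y dY f -> smor n X dX Y dY g -> f n.+1 = g n.+1 ->
  qeq n X dX Y dY f g.
Proof.
move=> sf sg efg; split; first exact: smorB.
by exists 0; rewrite efg subrr cmp0r.
Qed.

End MorphismsOfExangles.

Section ConeInclusion.
Variables (C : AddCat) (E : ExtFun C) (n : nat) (I B : seqC C).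
Variables (p0 : ob I 0%N = ob B 0%N) (io : forall i, Mor (ob I i) (ob B i)).

Lemma cmap_cone_in :
  (0 < n)%N -> is_cpx n I -> cmap n I B io -> io 0%N = eqH p0 ->
  cmap n B (cone n io) (cone_in n p0 io).
Proof.
move=> n_gt0 cI hio io0 [|j] lt_jn /=.
  move: (cI 0%N n_gt0) (hio 0%N (ltnW n_gt0)); rewrite io0 => dd0 io_sq.
  case: (0 < n)%N n_gt0 => // _.
  rewrite /mcol cmpDl -!cmpA (cmpA (- dd I 1)) cmpNl dd0 oppr0 cmp0l cmp0r add0r.
  by rewrite (cmpA (io 1%N)) io_sq -cmpA eqHK cmpf1.
case: (j < n)%N lt_jn => // _.
case: (j.+1 < n)%N.
  rewrite /mmat /mcol /mrow cmpDl -!cmpA cmpDl cmpDl -!cmpA bq1i2 bq2i2 cmp0r cmpf1.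
  by rewrite addr0 !cmp0r cmpf1 !add0r.
by rewrite /mrow cmpDl -!cmpA bq1i2 bq2i2 cmp0r cmpf1 add0r cmp1f.
Qed.

Lemma cone_in_last : cmp (eqH (coneT n io)) (cone_in n p0 io n.+1) = idm (ob B n.+1).
Proof.
move: (coneT n io) => q; simpl in q |- *.
by move: q; case: (n < n)%N (ltnn n) => // _ q; rewrite eqH_refl cmp1f.
Qed.

Lemma smor_cone_in (dB : Ext E (ob B n.+1) (ob B 0%N)) :
  (0 < n)%N -> is_cpx n I -> cmap n I B io -> io 0%N = eqH p0 ->
  smor n B dB (cone n io)
    (pull (eqH (coneT n io)) (push (cmp (dd I 0%N) (eqH (esym p0))) dB))
    (cone_in n p0 io).
Proof.
move=> n_gt0 cI hio io0; split; first exact: cmap_cone_in.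
by rewrite -pullM cone_in_last pull1.
Qed.

End ConeInclusion.

Theorem lemma2p16 (n : nat) (C : nExang n)
    (A B : seqC C)
    (delta : Ext (nE C) (ob A n.+1) (ob A 0%N))
    (delta' : Ext (nE C) (ob B n.+1) (ob B 0%N))
    (phi : forall i, Mor (ob A i) (ob B i)) :
  realizes A delta -> realizes B delta' ->
  smor n A delta B delta' phi ->
  exists (I : seqC C) (p0 : ob I 0%N = ob B 0%N) (p1 : ob I n.+1 = ob A n.+1)
         (pi : forall i, Mor (ob A i) (ob I i))
         (io : forall i, Mor (ob I i) (ob B i)),
    [/\ realizes I (pull (eqH p1) (push (eqH (esym p0)) (push (phi 0%N) delta))),
        smor n A delta I (pull (eqH p1) (push (eqH (esym p0)) (push (phi 0%N) delta))) pi
          /\ pi 0%N = cmp (eqH (esym p0)) (phi 0%N) /\ pi n.+1 = eqH (esym p1),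
        smor n I (pull (eqH p1) (push (eqH (esym p0)) (push (phi 0%N) delta))) B delta' io
          /\ io 0%N = eqH p0 /\ io n.+1 = cmp (phi n.+1) (eqH p1),
        realizes (cone n io)
          (pull (eqH (coneT n io)) (push (cmp (dd I 0%N) (eqH (esym p0))) delta'))
          /\ smor n B delta' (cone n io)
               (pull (eqH (coneT n io)) (push (cmp (dd I 0%N) (eqH (esym p0))) delta'))
               (cone_in n p0 io) &
        qeq n A delta B delta' phi (fun i => cmp (io i) (pi i))].
Proof.
move=> rA rB [cphi ephi].
have [I [p0 [p1 rI]]] := @real_ex n C _ _ (push (phi 0%N) delta).
set dI := pull (eqH p1) _ in rI.
have e_pi : push (cmp (eqH (esym p0)) (phi 0%N)) delta = pull (eqH (esym p1)) dI.
  by rewrite /dI -pullM eqHK pull1 pushM.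
have [pi [cpi [pi0 pin]]] := @R0 n C A I delta dI _ _ rA rI e_pi.
have spi : smor n A delta I dI pi by split; rewrite // pi0 pin.
have rI' : realizes I (push (eqH (esym p0)) (pull (cmp (phi n.+1) (eqH p1)) delta')).
  by rewrite pullM -ephi push_pull.
have [io [cio io0 ion rcone]] := @EA2 n C I B delta' p0 _ rI' rB.
have sio : smor n I dI B delta' io.
  by split; rewrite // io0 ion /dI push_pull -pushM eqHK push1 pullM ephi.
exists I, p0, p1, pi, io; split=> //.
  by split; [exact: rcone | apply: smor_cone_in; [exact: n_pos | exact: real_cpx rI | |]].
apply: qeq_of_last_eq; [by [] | exact: smor_comp spi sio |].
by rewrite /= ion pin -cmpA eqHK cmpf1.
Qed.
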